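(* Let $n'$ be a positive even integer and $q\ge 4$ be even. There exists an ordering of all words of $\mathbb{Z}_q^{n'}$ in which consecutive words have Hamming distance $1$, beginning with $(0,0,\ldots,0)$ and ending with $(1,1,\ldots,1)$.
   Context: The Hamming distance between two words is the number of coordinates in which they differ. *)

From mathcomp Require Import all_boot.
Set Implicit Arguments. Unset Strict Implicit. Unset Printing Implicit Defensive.

Definition word (q n : nat) := (n.-tuple 'I_q)%type.

Definition hamming (q n : nat) (u v : word q n) : nat :=
  #|[pred i : 'I_n | tnth u i != tnth v i]|.

Definition gray_path (q n : nat) (w0 : word q n) (t : seq (word q n)) : Prop :=
  [/\ uniq (w0 :: t),
      (forall w : word q n, w \in w0 :: t),
      path (fun u v => hamming u v == 1) w0 t,
      (forall i, val (tnth w0 i) = 0)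
    & (forall i, val (tnth (last w0 t) i) = 1)].

From mathcomp Require Import all_boot.

Set Implicit Arguments.
Unset Strict Implicit.
Unset Printing Implicit Defensive.

(* For every q >= 3 and every n there is a Hamiltonian path in the Hamming graph
   Z_q^n between any two distinct constant words c^n and d^n.  Induct on n and sweep the layers {a} x Z_q^(n-1),
   with a running through all of Z_q from c to d: in the i-th layer follow a
   path from s_i^(n-1) to s_(i+1)^(n-1), then pass to the next layer by
   changing the first coordinate only.  The connectors s_0 = c, ..., s_q = d
   only need consecutive values to differ, which alternating between c and a
   third symbol before the final d achieves. *)

Section HamiltonPath.

Variables (T : eqType) (e : rel T).

Definition hamilton_path (A : pred T) (u v : T) :=
  exists t, [/\ uniq (u :: t), u :: t =i A, path e u t & last u t = v].

Lemma eq_hamilton_path (A B : pred T) (u v : T) :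
  A =i B -> hamilton_path A u v -> hamilton_path B u v.
Proof.
by move=> eqAB [t [Ut Mt Pt Lt]]; exists t; split=> // w; rewrite Mt eqAB.
Qed.

Lemma hamilton_path_cat (A B : pred T) (u v u' v' : T) :
  {in A, forall w, w \notin B} -> e v u' ->
  hamilton_path A u v -> hamilton_path B u' v' ->
  hamilton_path [predU A & B] u v'.
Proof.
move=> disjAB e_vu' [t [Ut Mt Pt Lt]] [t' [Ut' Mt' Pt' Lt']].
exists (t ++ u' :: t'); split.
- rewrite -cat_cons cat_uniq Ut Ut' andbT; apply/hasPn => w.
  by rewrite Mt' Mt => wB; apply/negP => /disjAB; rewrite wB.
- by move=> w; rewrite -cat_cons mem_cat Mt Mt' !inE.
- by rewrite cat_path Pt Lt /= e_vu' Pt'.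
- by rewrite last_cat.
Qed.

Lemma alternating_path (c x d : T) k :
  c != x -> c != d -> x != d ->
  exists cs, [/\ size cs = k.+1, path (fun a b => a != b) c cs & last c cs = d].
Proof.
elim: k c x => [|k IHk] c x cx cd xd; first by exists [:: d]; rewrite /= cd.
have xc : x != c by rewrite eq_sym.
have [cs [size_cs path_cs last_cs]] := IHk x c xc xd cd.
by exists (x :: cs); rewrite /= size_cs cx path_cs.
Qed.

End HamiltonPath.

Section Words.

Variable q : nat.

Definition adjacent n (u v : word q n) := hamming u v == 1.

Lemma hamming_cons n (a b : 'I_q) (x y : word q n) :
  hamming [tuple of a :: x] [tuple of b :: y] = (a != b) + hamming x y.
Proof.
rewrite /hamming -!sum1_card big_mkcond big_ord_recl /= !inE !tnth0.
congr (_ + _); rewrite [RHS]big_mkcond; apply: eq_bigr => i _.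
by rewrite !inE !tnthS.
Qed.

Lemma hammingxx n (x : word q n) : hamming x x = 0.
Proof. by apply: eq_card0 => i; rewrite !inE eqxx. Qed.

Lemma adjacent_cons2 n (a : 'I_q) (x y : word q n) :
  adjacent [tuple of a :: x] [tuple of a :: y] = adjacent x y.
Proof. by rewrite /adjacent hamming_cons eqxx. Qed.

Lemma adjacent_cons_head n (a b : 'I_q) (x : word q n) :
  adjacent [tuple of a :: x] [tuple of b :: x] = (a != b).
Proof. by rewrite /adjacent hamming_cons hammingxx addn0; case: (a != b). Qed.

Lemma hamilton_path_cons n (a : 'I_q) (u v : word q n) :
  hamilton_path (@adjacent n) predT u v ->
  hamilton_path (@adjacent n.+1) [pred w | thead w == a]
    [tuple of a :: u] [tuple of a :: v].
Proof.
move=> [t [Ut Mt Pt Lt]].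
pose f (x : word q n) : word q n.+1 := [tuple of a :: x].
have f_inj : injective f by move=> x y /(congr1 val) [] /val_inj.
exists (map f t); rewrite -[[tuple of a :: u]]/(f u) -[[tuple of a :: v]]/(f v).
split; rewrite -?map_cons.
- by rewrite map_inj_uniq.
- case/tupleP=> b y; rewrite [in RHS]inE theadE.
  apply/mapP/eqP => [[x _ /(congr1 (@thead _ _))]|->]; first by rewrite !theadE.
  by exists y; rewrite ?Mt.
- by rewrite path_map; apply: sub_path Pt => x y; rewrite /= adjacent_cons2.
- by rewrite last_map Lt.
Qed.

Section Layers.

Variable n : nat.

Hypothesis hamilton_nseq : forall c d : 'I_q, c != d ->
  hamilton_path (@adjacent n) predT (nseq_tuple n c) (nseq_tuple n d).

Lemma hamilton_path_layers (hs : seq 'I_q) (a c : 'I_q) (cs : seq 'I_q) :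
  uniq (a :: hs) -> size cs = size (a :: hs) -> path (fun x y => x != y) c cs ->
  hamilton_path (@adjacent n.+1) [pred w | thead w \in a :: hs]
    [tuple of a :: nseq_tuple n c] [tuple of last a hs :: nseq_tuple n (last c cs)].
Proof.
elim: hs a c cs => [|b hs IHhs] a c [|c' cs] //=.
  case: cs => // _ _ /andP[cc' _].
  apply: eq_hamilton_path (hamilton_path_cons a (hamilton_nseq cc')) => w.
  by rewrite !inE.
move=> /andP[a_notin uniq_hs] [size_cs] /andP[cc' path_cs].
have layer_a := hamilton_path_cons a (hamilton_nseq cc').
have layers_hs := IHhs b c' cs uniq_hs size_cs path_cs.
apply: eq_hamilton_path (hamilton_path_cat _ _ layer_a layers_hs).
- by move=> w; rewrite !inE.
- by move=> w; rewrite !inE => /eqP->.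
- by rewrite adjacent_cons_head; apply: contraNneq a_notin => ->; rewrite mem_head.
Qed.

End Layers.

End Words.

Lemma exists_ord_neq2 q (c d : 'I_q) : 2 < q -> exists x : 'I_q, (x != c) && (x != d).
Proof.
move=> q_gt2; apply/existsP; apply: contraTT q_gt2 => /existsPn no_x.
rewrite -leqNgt -{1}(card_ord q); apply: leq_trans (card_size [:: c; d]).
apply/subset_leq_card/subsetP => y _.
by have := no_x y; rewrite !inE negb_and !negbK; case/orP=> ->; rewrite ?orbT.
Qed.

Lemma hamilton_path_nseq q n (c d : 'I_q) : 2 < q -> c != d ->
  hamilton_path (@adjacent q n) predT (nseq_tuple n c) (nseq_tuple n d).
Proof.
move=> q_gt2; elim: n c d => [|n IHn] c d cd.
  exists [::]; split=> // [w|]; last exact: val_inj.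
  by rewrite (tuple0 w) (tuple0 (nseq_tuple 0 c)) !inE.
have [x /andP[xc xd]] := exists_ord_neq2 c d q_gt2.
pose hs := rcons [seq y <- enum 'I_q | (y != c) && (y != d)] d.
have uniq_hs : uniq (c :: hs).
  rewrite /= rcons_uniq mem_rcons !inE negb_or cd /= !mem_filter !eqxx /= andbF.
  by rewrite filter_uniq ?enum_uniq.
have cx : c != x by rewrite eq_sym.
have [cs [size_cs path_cs last_cs]] := alternating_path (size hs) cx cd xd.
have := hamilton_path_layers IHn uniq_hs size_cs path_cs.
have nseqS (a : 'I_q) : [tuple of a :: nseq_tuple n a] = nseq_tuple n.+1 a.
  exact: val_inj.
rewrite last_rcons last_cs !nseqS; apply: eq_hamilton_path => w.
rewrite !inE mem_rcons inE mem_filter mem_enum andbT.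
by case: (thead w == c); case: (thead w == d).
Qed.

Theorem lemma5 (n q : nat) :
  0 < n -> ~~ odd n -> 4 <= q -> ~~ odd q ->
  exists (w0 : word q n) (t : seq (word q n)), gray_path w0 t.
Proof.
move=> _ _ q_ge4 _.
pose zero : 'I_q := Ordinal (@leq_trans 4 1 q isT q_ge4).
pose one : 'I_q := Ordinal (@leq_trans 4 2 q isT q_ge4).
have [t [Ut Mt Pt Lt]] := hamilton_path_nseq n (ltnW q_ge4) (isT : zero != one).
exists (nseq_tuple n zero), t; split=> // i.
- by rewrite tnth_nseq.
- by rewrite Lt tnth_nseq.
Qed.
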